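(* Let $t\ge0$, $\ell\ge1$ and $k\ge1$ be integers. Let $G$ be a graph contained in $H\boxtimes L\boxtimes K_\ell$, where $H$ and $L$ are graphs and $H$ has treewidth at most $t$. Let $d:=\Delta(G^{\lfloor k/2\rfloor})$ and $D:=\Delta(L^{\lfloor k/2\rfloor})$. Then $G^k$ is contained in $J\boxtimes L^{2\lfloor k/2\rfloor+1}\boxtimes K_{\ell(d+1)(D+1)}$ for some graph $J$ with treewidth at most $\binom{2\lfloor k/2\rfloor+t+1}{t}-1$.
   Context: Graphs are finite, simple, undirected. Contained means isomorphic to a subgraph. The strong product $G_1\boxtimes G_2$ has vertex set $V(G_1)\times V(G_2)$ with distinct $(a,v),(b,u)$ adjacent iff ($a=b$ or $ab\in E(G_1)$) and ($u=v$ or $uv\in E(G_2)$). For an integer $m\ge0$, the $m$-th power $G^m$ has vertex set $V(G)$ with distinct $u,v$ adjacent iff $\mathrm{dist}_G(u,v)\le m$ (so $G^0$ is edgeless). $\Delta$ denotes maximum degree and $K_n$ the complete graph on $n$ vertices. *)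

From mathcomp Require Import all_boot.
Set Implicit Arguments. Unset Strict Implicit. Unset Printing Implicit Defensive.

Record graph := Graph { vert : finType; adj : rel vert }.
Arguments adj : clear implicits.

Definition simple (G : graph) : Prop :=
  symmetric (adj G) /\ irreflexive (adj G).

Definition contained (G H : graph) : Prop :=
  exists f : vert G -> vert H,
    injective f /\ forall x y, adj G x y -> adj H (f x) (f y).

Definition sprod (G1 G2 : graph) : graph :=
  @Graph (vert G1 * vert G2)%type
    (fun x y => (x != y) && ((x.1 == y.1) || adj G1 x.1 y.1)
                          && ((x.2 == y.2) || adj G2 x.2 y.2)).

Definition complete (n : nat) : graph := @Graph 'I_n (fun x y => x != y).

Fixpoint reach {G : graph} (m : nat) (u v : vert G) : bool :=
  match m with
  | 0 => u == v
  | m'.+1 => reach m' u v || [exists w, reach m' u w && adj G w v]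
  end.

Definition gpow (G : graph) (m : nat) : graph :=
  @Graph (vert G) (fun u v => (u != v) && reach m u v).

Definition maxdeg (G : graph) : nat :=
  \max_(v : vert G) #|[set w | adj G v w]|.

(* trees: simple, nonempty, connected, and every edge is a bridge (acyclic) *)
Definition is_tree (T : graph) : Prop :=
  simple T /\ (exists x : vert T, True) /\
  (forall x y : vert T, connect (adj T) x y) /\
  (forall x y : vert T, adj T x y ->
     ~~ connect (fun a b => adj T a b &&
                  ~~ (((a == x) && (b == y)) || ((a == y) && (b == x)))) x y).

Definition tree_decomposition_width_le (G : graph) (T : graph)
    (B : vert T -> {set vert G}) (w : nat) : Prop :=
  is_tree T /\
  (forall v : vert G, exists i, v \in B i) /\
  (forall u v : vert G, adj G u v -> exists i, (u \in B i) && (v \in B i)) /\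
  (forall v : vert G, forall i j, v \in B i -> v \in B j ->
     connect (fun a b => adj T a b && (v \in B a) && (v \in B b)) i j) /\
  (forall i, #|B i| <= w.+1).

Definition treewidth_le (G : graph) (w : nat) : Prop :=
  exists (T : graph) (B : vert T -> {set vert G}),
    @tree_decomposition_width_le G T B w.

From mathcomp Require Import all_boot.
Set Implicit Arguments. Unset Strict Implicit. Unset Printing Implicit Defensive.

(* Fix a tree decomposition (T, B) of H of width t rooted at [root], and let [top h] be
   the bag of h closest to the root.  Call y [upper] for x when y lies in the top bag of
   x and [top y] is an ancestor of [top x].  With m = k/2, the [anchor] of a vertex u of
   G is the vertex of the H-projection of the m-ball around u whose top bag is highest.
   Walking inside the projected balls shows that the anchor is reached by 2m upper steps
   from every bag meeting the ball, so in the graph J whose bags are the 2m-step upper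
   closures of the bags of T, the anchors of two vertices at distance at most 2m+1 are
   equal or adjacent.  Along a root path the bags containing a vertex form an interval
   of depths, and counting upper closures of intervals bounds the bags of J by
   C(2m+t+1, t).  Finally u is sent to its anchor, its L-coordinate and an index
   separating the at most l(d+1)(D+1) vertices sharing these two coordinates. *)

Section Walks.
Variable G : graph.
Implicit Types (u v w : vert G) (n : nat).

Lemma reachS n u v : reach n u v -> reach n.+1 u v.
Proof. by move=> /= ->. Qed.

Lemma reach_le n n' u v : n <= n' -> reach n u v -> reach n' u v.
Proof.
elim: n' => [|n' IH]; first by rewrite leqn0 => /eqP ->.
by rewrite leq_eqVlt => /predU1P [-> //|/IH ih /ih /reachS].
Qed.

Lemma reach_adj n u w v : reach n u w -> adj G w v -> reach n.+1 u v.
Proof. by move=> uw wv /=; apply/orP; right; apply/existsP; exists w; rewrite uw. Qed.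

Lemma reachSP n u v : reach n.+1 u v -> reach n u v \/ exists2 w, reach n u w & adj G w v.
Proof. by move=> /= /orP [|/existsP [w /andP [uw wv]]]; [left | right; exists w]. Qed.

Lemma reach1 u v : adj G u v -> reach 1 u v.
Proof. by apply: reach_adj; rewrite /= eqxx. Qed.

Lemma reach_cat a b u w v : reach a u w -> reach b w v -> reach (a + b) u v.
Proof.
elim: b v => [|b IH] v uw; first by move=> /eqP <-; rewrite addn0.
rewrite addnS => /reachSP [/(IH _ uw) /reachS //|[x /(IH _ uw) ux xv]].
exact: reach_adj ux xv.
Qed.

Lemma reach_split a b u v : reach (a + b) u v -> exists2 w, reach a u w & reach b w v.
Proof.
elim: b v => [|b IH] v; first by rewrite addn0 => uv; exists v; rewrite //= eqxx.
rewrite addnS => /reachSP [/IH [w uw wv]|[x /IH [w uw wx] xv]]; exists w => //.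
  exact: reachS.
exact: reach_adj wx xv.
Qed.

Lemma reach_path u p : path (adj G) u p -> reach (size p) u (last u p).
Proof.
elim: p u => [|w p IH] u; first by rewrite /= eqxx.
case/andP=> /reach1 uw /IH wp; rewrite [size _]/= [last _ _]/= -add1n.
exact: reach_cat uw wp.
Qed.

Lemma reach_sym n u v : symmetric (adj G) -> reach n u v -> reach n v u.
Proof.
move=> symG; elim: n u v => [|n IH] u v; first by move=> /eqP ->; rewrite /= eqxx.
case/reachSP=> [/IH /reachS //|[w /IH wu wv]]; rewrite -add1n; apply: reach_cat wu.
by apply: reach1; rewrite symG.
Qed.

End Walks.

Lemma reach_map (G G' : graph) (g : vert G -> vert G') n u v :
    (forall x y, adj G x y -> g x = g y \/ adj G' (g x) (g y)) ->
  reach n u v -> reach n (g u) (g v).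
Proof.
move=> gG; elim: n v => [|n IH] v; first by move=> /eqP ->; rewrite /= eqxx.
case/reachSP=> [/IH /reachS //|[w /IH uw /gG [<-|]]]; first exact: reachS.
exact: reach_adj.
Qed.

Lemma card_ball (G : graph) m (x : vert G) :
  #|[set w | reach m x w]| <= (maxdeg (gpow G m)).+1.
Proof.
apply: (@leq_trans #|x |: [set w | adj (gpow G m) x w]|).
  apply/subset_leq_card/subsetP => w; rewrite !inE /= => xw.
  by case: eqVneq => //= /eqP; rewrite eq_sym => ->.
rewrite cardsU1 -add1n leq_add ?leq_b1 //.
exact: (@leq_bigmax _ (fun v => #|[set w | adj (gpow G m) v w]|)).
Qed.

Section BoundedClosure.
Variables (T : finType) (e : rel T).
Implicit Types (S : {set T}) (x y : T).

Fixpoint reachset s S : {set T} :=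
  if s is s'.+1 then reachset s' S :|: [set y | [exists x in reachset s' S, e x y]]
  else S.

Lemma reachsetS s S : reachset s S \subset reachset s.+1 S.
Proof. exact: subsetUl. Qed.

Lemma reachset_le s s' S : s <= s' -> reachset s S \subset reachset s' S.
Proof.
elim: s' => [|s' IH]; first by rewrite leqn0 => /eqP ->.
by rewrite leq_eqVlt => /predU1P [-> //|/IH /subset_trans]; apply; apply: reachsetS.
Qed.

Lemma sub_reachset s S : S \subset reachset s S.
Proof. exact: reachset_le 0 s S (leq0n s). Qed.

Lemma reachset_adj s S x y : x \in reachset s S -> e x y -> y \in reachset s.+1 S.
Proof. by move=> xS xy; rewrite !inE; apply/orP; right; apply/existsP; exists x; rewrite xS. Qed.

Lemma reachset1 x y : e x y -> y \in reachset 1 [set x].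
Proof. by apply: reachset_adj; rewrite inE. Qed.

Lemma reachsetSP s S y : y \in reachset s.+1 S ->
  y \in reachset s S \/ exists2 x, x \in reachset s S & e x y.
Proof. by rewrite !inE => /orP [|/existsP [x /andP [xS xy]]]; [left | right; exists x]. Qed.

Lemma reachset_ind (P : pred T) s S :
    {in S, forall x, P x} -> (forall x y, P x -> e x y -> P y) ->
  {in reachset s S, forall x, P x}.
Proof.
move=> PS Pe; elim: s => [//|s IH] y /reachsetSP [/IH //|[x /IH]]; exact: Pe.
Qed.

Lemma reachset_set0 s : reachset s set0 = set0.
Proof.
have none : {in reachset s set0, forall x, pred0 x}.
  by apply: reachset_ind => // x; rewrite inE.
by apply/setP=> y; rewrite inE; apply/idP => /none.
Qed.

Lemma reachset_cat i j S : reachset i (reachset j S) \subset reachset (j + i) S.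
Proof.
elim: i => [|i IH]; first by rewrite addn0.
apply/subsetP => y /reachsetSP [yS|[x xS xy]]; rewrite addnS.
  by apply: (subsetP (reachsetS _ _)); apply: (subsetP IH).
exact: reachset_adj (subsetP IH _ xS) xy.
Qed.

End BoundedClosure.

Lemma reachset_mono (T : finType) (e e' : rel T) (I : pred T) s (S S' : {set T}) :
    {in S, forall x, I x} -> (forall x y, I x -> e x y -> I y && e' x y) ->
  S \subset S' -> reachset e s S \subset reachset e' s S'.
Proof.
move=> IS Ie sSS'; elim: s => [//|s IH]; apply/subsetP => y /reachsetSP [yS|[x xS xy]].
  by apply: (subsetP (reachsetS _ _ _)); apply: (subsetP IH).
have Ix : I x.
  by apply: (reachset_ind (e := e) IS) xS => x' y' Ix' /(Ie _ _ Ix') /andP [].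
by case/andP: (Ie _ _ Ix xy) => _ /(reachset_adj (subsetP IH _ xS)).
Qed.

Lemma reachset_subset (T : finType) (e : rel T) s (S S' : {set T}) :
  S \subset S' -> reachset e s S \subset reachset e s S'.
Proof. by apply: (reachset_mono (I := predT)) => // x y _ ->. Qed.

Section IntervalReachset.
Variables (X : finType) (lo hi : X -> nat).
Implicit Types (V : {set X}) (x y c : X).

Definition covering V i := [set x in V | lo x <= i <= hi x].

Definition interval_step V x y := y \in covering V (lo x).

Definition ply_le V p w := forall i, i <= p -> #|covering V i| <= w.

Lemma ply_le_prefix V p q w : q <= p -> ply_le V p w -> ply_le V q w.
Proof. by move=> qp ply i iq; apply: ply; apply: leq_trans qp. Qed.

Section RemoveLowest.
Variables (V : {set X}) (p : nat) (c : X).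
Hypothesis c_cov : c \in covering V p.
Hypothesis c_min : forall x, x \in covering V p -> lo c <= lo x.
Let V' := [set x in V | (lo c <= lo x) && (x != c)].

Lemma covering_lowest : c \in covering V (lo c).
Proof. by move: c_cov; rewrite !inE => /and3P [-> cp pc]; rewrite leqnn (leq_trans cp pc). Qed.

Lemma covering_removed x : x \in covering V p -> x = c \/ x \in covering V' p.
Proof.
case: (eqVneq x c) => [|xc xp]; [by left | right].
by move: (xp); rewrite !inE xc c_min // andbT => /andP [-> ->].
Qed.

Lemma interval_step_removed x y : x \in V' -> interval_step V x y ->
  interval_step V' x y \/ y \in covering V (lo c).
Proof.
rewrite /interval_step => xV' xy.
case: (eqVneq y c) => [->|yc]; first by right; exact: covering_lowest.
move: xV' xy; rewrite !inE => /and3P [_ cx _] /and3P [yV yx xy].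
rewrite yV yc yx xy /= andbT; case: (leqP (lo c) (lo y)) => cy; [by left | right].
by rewrite (ltnW cy) (leq_trans cx xy).
Qed.

Lemma ply_removed w : ply_le V p w.+1 -> ply_le V' p w.
Proof.
move=> ply i ip; case: (ltnP i (lo c)) => [ic|ci].
  rewrite (_ : covering V' i = set0) ?cards0 //; apply/setP => x; rewrite !inE.
  apply/negbTE/negP => /and3P [/and3P [_ cx _] /(leq_trans cx) /(leq_trans ic)].
  by rewrite ltnn.
have c_i : c \in covering V i.
  by move: c_cov; rewrite !inE => /and3P [-> _ pc]; rewrite ci (leq_trans ip pc).
rewrite -ltnS; apply: leq_trans (ply i ip); rewrite (cardsD1 c (covering V i)) c_i ltnS.
by apply/subset_leq_card/subsetP => x; rewrite !inE => /and3P [/and3P [-> _ ->] -> ->].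
Qed.

Lemma reachset_removed j :
  reachset (interval_step V) j.+1 (covering V p) \subset
  reachset (interval_step V') j.+1 (covering V' p) :|:
  reachset (interval_step V) j (covering V (lo c)).
Proof.
have escape i x y : x \in reachset (interval_step V') i (covering V' p) ->
    interval_step V x y -> y \in reachset (interval_step V') i.+1 (covering V' p) \/ y \in covering V (lo c).
  move=> xR xy; have xV' : x \in V'.
    apply: (reachset_ind (P := [in V'])) xR => [z|z z' _]; first by rewrite inE => /andP [].
    by rewrite /interval_step inE => /andP [].
  by case: (interval_step_removed xV' xy) => [/(reachset_adj xR)|]; [left | right].
elim: j => [|j IH]; apply/subsetP => y /reachsetSP [yS|[x xS xy]]; rewrite inE.
- case: (covering_removed yS) => [->|yR]; first by rewrite covering_lowest orbT.
  by rewrite (subsetP (reachsetS _ _ _)).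
- case: (covering_removed xS) => [xc|/(escape 0) /(_ xy) [-> //|->]]; last by rewrite orbT.
  by move: xy; rewrite /interval_step xc => ->; rewrite orbT.
- by case/setUP: (subsetP IH y yS) => /(subsetP (reachsetS _ _ _)) ->; rewrite ?orbT.
- case/setUP: (subsetP IH x xS) => [/(escape j.+1) /(_ xy) [-> //|yc]|xQ].
    by rewrite (subsetP (sub_reachset _ _ _) _ yc) orbT.
  by rewrite (reachset_adj xQ xy) orbT.
Qed.

End RemoveLowest.

(* Let c be the interval of least left end among those through p.  A walk either stays
   among the intervals starting after c, whose ply is one less, or enters the intervals
   through [lo c]; whence 'C(s+t+2, t) = 'C(s+t+1, t-1) + 'C(s+t+1, t). *)
Lemma card_reachset_covering t s V p : ply_le V p t.+1 ->
  #|reachset (interval_step V) s (covering V p)| <= 'C(s + t.+1, t).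
Proof.
elim: t s V p => [|t IHt] s; elim: s => [|s IHs] V p ply; try by rewrite add0n binSn; apply: ply.
all: have [->|[x0 x0p]] := set_0Vmem (covering V p); first by rewrite reachset_set0 cards0.
all: have [c c_cov c_min] := arg_minnP lo x0p.
all: have {}c_cov : c \in covering V p := c_cov.
all: have cp : lo c <= p by move: c_cov; rewrite !inE => /and3P [].
all: have ply_c := ply_le_prefix cp ply.
all: apply: leq_trans (subset_leq_card (reachset_removed c_cov c_min s)) _.
all: apply: leq_trans (leq_card_setU _ _) _.
- rewrite bin0 -[1]add0n leq_add //; last by rewrite -(bin0 (s + 1)) IHs.
  set V' := [set x in V | _]; rewrite (_ : covering V' p = set0) ?reachset_set0 ?cards0 //.
  by apply/eqP; rewrite -cards_eq0 -leqn0 (ply_removed c_cov ply).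
- rewrite addSn binS addnC leq_add ?IHs // -addSnnS.
  exact: IHt (ply_removed c_cov ply).
Qed.

End IntervalReachset.

Lemma connect_cross (T : finType) (e : rel T) (Q : pred T) x y :
  connect e x y -> Q x -> ~~ Q y -> exists c d, [/\ e c d, Q c & ~~ Q d].
Proof.
move/connectP => [p ep ->]; elim: p x ep => [|z p IH] x /=; first by move=> _ ->.
case/andP=> xz zp Qx; case Qz: (Q z); first exact: IH.
by move=> _; exists x, z; rewrite xz Qx Qz.
Qed.

Section RootedTree.
Variable T : graph.
Hypothesis T_tree : is_tree T.
Variable root : vert T.
Implicit Types a b x y z : vert T.

Lemma tree_sym : symmetric (adj T).
Proof. by case: T_tree => [[]]. Qed.

Lemma reach_root z : exists n, reach n root z.
Proof.
case: T_tree => _ [_ [/(_ root z) /connectP [p rp ->] _]].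
by exists (size p); apply: reach_path.
Qed.

Definition depth z := ex_minn (reach_root z).

Lemma depth_reach z : reach (depth z) root z.
Proof. by rewrite /depth; case: ex_minnP. Qed.

Lemma depth_min z n : reach n root z -> depth z <= n.
Proof. by rewrite /depth; case: ex_minnP => m _; apply. Qed.

Lemma depth_eq0 z : (depth z == 0) = (z == root).
Proof.
apply/eqP/eqP => [d0|->]; first by have := depth_reach z; rewrite d0 => /eqP.
by apply/eqP; rewrite -leqn0 depth_min //= eqxx.
Qed.

Lemma depth_root : depth root = 0.
Proof. by apply/eqP; rewrite depth_eq0. Qed.

Definition parent z := odflt z [pick w | adj T w z && ((depth w).+1 == depth z)].

Lemma parentP z : z != root -> adj T (parent z) z /\ (depth (parent z)).+1 = depth z.
Proof.
rewrite -depth_eq0 /parent; case: pickP => [w /andP [wz /eqP //]|none] /=.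
have := depth_reach z; case Ez: (depth z) => [|d] // /reachSP [/depth_min|[w rw wz]].
  by rewrite Ez ltnn.
have := none w; rewrite wz Ez eqSS eqn_leq depth_min //= -ltnS -Ez.
by rewrite depth_min // (reach_adj (depth_reach w) wz).
Qed.

Lemma parent_root : parent root = root.
Proof. by rewrite /parent; case: pickP => [w /andP [_ /eqP]|//]; rewrite depth_root. Qed.

Lemma depth_parent z : depth (parent z) = (depth z).-1.
Proof.
case: (eqVneq z root) => [->|/parentP [_ <-] //].
by rewrite parent_root depth_root.
Qed.

Lemma depth_iter j z : depth (iter j parent z) = depth z - j.
Proof. by elim: j => [|j IH]; rewrite ?subn0 // iterS depth_parent IH subnS. Qed.

Lemma iter_parent_root j : iter j parent root = root.
Proof. by elim: j => //= j ->; apply: parent_root. Qed.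

Lemma iter_parent_depth z : iter (depth z) parent z = root.
Proof. by apply/eqP; rewrite -depth_eq0 depth_iter subnn. Qed.

Definition ancestor a z := iter (depth z - depth a) parent z == a.

Lemma ancestorP a z : reflect (exists j, iter j parent z = a) (ancestor a z).
Proof.
apply: (iffP eqP) => [<-|[j <-]]; first by eexists.
rewrite depth_iter; case: (leqP j (depth z)) => [/subKn -> //|/ltnW jz].
by rewrite (eqP jz) subn0 iter_parent_depth -(subnK jz) iterD iter_parent_depth iter_parent_root.
Qed.

Lemma ancestor_refl z : ancestor z z.
Proof. by apply/ancestorP; exists 0. Qed.

Lemma ancestor_root z : ancestor root z.
Proof. by apply/ancestorP; exists (depth z); apply: iter_parent_depth. Qed.

Lemma ancestor_parent z : ancestor (parent z) z.
Proof. by apply/ancestorP; exists 1. Qed.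

Lemma ancestor_trans a b z : ancestor a b -> ancestor b z -> ancestor a z.
Proof.
by move=> /ancestorP [i <-] /ancestorP [j <-]; apply/ancestorP; exists (i + j); rewrite iterD.
Qed.

Lemma ancestor_depth a z : ancestor a z -> depth a <= depth z.
Proof. by move=> /ancestorP [j <-]; rewrite depth_iter leq_subr. Qed.

Lemma ancestor_eq a z : ancestor a z -> depth a = depth z -> a = z.
Proof. by rewrite /ancestor => /eqP az e; rewrite -az e subnn. Qed.

Lemma ancestor_antisym a z : ancestor a z -> ancestor z a -> a = z.
Proof.
move=> az za; apply: (ancestor_eq az).
by apply/eqP; rewrite eqn_leq (ancestor_depth az) (ancestor_depth za).
Qed.

Lemma ancestor_total a b z : ancestor a z -> ancestor b z -> ancestor a b || ancestor b a.
Proof.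
move=> /ancestorP [i <-] /ancestorP [j <-]; case: (leqP i j) => [ij|/ltnW ji].
  by apply/orP; right; apply/ancestorP; exists (j - i); rewrite -iterD subnK.
by apply/orP; left; apply/ancestorP; exists (i - j); rewrite -iterD subnK.
Qed.

Lemma ancestor_le a b z : ancestor a z -> ancestor b z -> depth a <= depth b -> ancestor a b.
Proof.
move=> az bz ab; case/orP: (ancestor_total az bz) => // ba.
by rewrite (@ancestor_eq b a ba) ?ancestor_refl //; apply/eqP; rewrite eqn_leq ab ancestor_depth.
Qed.

Lemma min_depth_ancestor a b c : ancestor a b || ancestor b a -> ancestor a c || ancestor c a ->
  depth c <= depth a -> depth c <= depth b -> ancestor c b.
Proof.
move=> ab ac ca cb; have [ca'|] := boolP (ancestor c a).
  by case/orP: ab => [/(ancestor_trans ca') //|ba]; apply: ancestor_le ca' ba cb.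
move/negbTE=> nca; rewrite nca orbF in ac.
have c_a : c = a by apply/esym/(ancestor_eq ac)/eqP; rewrite eqn_leq ca ancestor_depth.
rewrite c_a in cb *; case/orP: ab => // ba; rewrite (@ancestor_eq b a ba) ?ancestor_refl //.
by apply/eqP; rewrite eqn_leq ancestor_depth.
Qed.

Lemma ancestor_parent_r a z : ancestor a z -> a != z -> ancestor a (parent z).
Proof.
by move=> /ancestorP [[<-|j <-]]; rewrite ?eqxx // => _; apply/ancestorP; exists j; rewrite iterSr.
Qed.

Lemma ancestor_at_depth z i : i <= depth z -> exists2 a, ancestor a z & depth a = i.
Proof.
move=> iz; exists (iter (depth z - i) parent z); last by rewrite depth_iter subKn.
by apply/ancestorP; eexists.
Qed.

Lemma connect_parent_path (e : rel (vert T)) a z : ancestor a z ->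
    (forall y, ancestor a y -> ancestor y z -> y != a -> e y (parent y)) ->
  connect e z a.
Proof.
move=> /ancestorP [j]; elim: j z => [|j IH] z; first by move=> <-; rewrite connect0.
rewrite iterSr => za ez; case: (eqVneq z a) => [->|zna]; first exact: connect0.
apply: connect_trans (connect1 (ez z _ (ancestor_refl z) zna)) (IH _ za _).
  by apply/ancestorP; exists j.+1; rewrite iterSr.
move=> y ay yz; apply: ez ay (ancestor_trans yz (ancestor_parent z)).
Qed.

Lemma tree_edge_parent x y : adj T x y -> x = parent y \/ y = parent x.
Proof.
move=> xy; case: (eqVneq x (parent y)) => [|xpy]; first by left.
case: (eqVneq y (parent x)) => [|ypx]; first by right.
case: T_tree => _ [_ [_ /(_ x y xy) /negP]]; case.
set e := (fun a b => _); have e_sym : symmetric e.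
  move=> a b; rewrite /e tree_sym.
  by case: (a == x); case: (a == y); case: (b == x); case: (b == y); rewrite ?andbF ?andbT.
have to_root z : connect e z root.
  apply: connect_parent_path (ancestor_root z) _ => w _ _ wr.
  rewrite /e tree_sym (parentP wr).1 /=; apply/negP => /orP [] /andP [/eqP ex /eqP ey].
    by move: ypx; rewrite -ex -ey eqxx.
  by move: xpy; rewrite -ex -ey eqxx.
by apply: connect_trans (to_root x) _; rewrite (sym_connect_sym e_sym).
Qed.

Lemma connect_leave_subtree (e : rel (vert T)) a x y : subrel e (adj T) ->
  connect e x y -> ancestor a x -> ~~ ancestor a y -> e a (parent a).
Proof.
move=> eT /connect_cross cross ax /(cross _ ax) [c [d [cd ac nad]]].
case: (tree_edge_parent (eT _ _ cd)) => [cpd|dpc].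
  by move: nad; rewrite (ancestor_trans ac) // cpd ancestor_parent.
case: (eqVneq c a) => [ca|nca]; first by rewrite -ca -dpc.
by move: nad; rewrite dpc ancestor_parent_r // eq_sym.
Qed.

End RootedTree.

Section TreeDecomposition.
Variables (H T : graph) (B : vert T -> {set vert H}) (t : nat).
Hypothesis TD : tree_decomposition_width_le B t.
Variable root : vert T.

Let T_tree : is_tree T := TD.1.
Local Notation depth := (depth T_tree root).
Local Notation parent := (parent T_tree root).
Local Notation ancestor := (ancestor T_tree root).
Implicit Types (x y h : vert H) (n z : vert T).

Lemma bag_cover h : exists n, h \in B n.
Proof. by case: TD => _ []. Qed.

Lemma bag_edge x y : adj H x y -> exists n, (x \in B n) && (y \in B n).
Proof. by case: TD => _ [_ [edge _]]; apply: edge. Qed.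

Lemma bag_connect h i j : h \in B i -> h \in B j ->
  connect (fun a b => adj T a b && (h \in B a) && (h \in B b)) i j.
Proof. by case: TD => _ [_ [_ [conn _]]]; apply: conn. Qed.

Lemma card_bag n : #|B n| <= t.+1.
Proof. by case: TD => _ [_ [_ []]]. Qed.

Definition top h :=
  odflt root [pick n | (h \in B n) && [forall n', (h \in B n') ==> (depth n <= depth n')]].

Lemma top_spec h : h \in B (top h) /\ forall n, h \in B n -> depth (top h) <= depth n.
Proof.
rewrite /top; case: pickP => [n /andP [hn /forallP min_n]|none] /=.
  by split=> // n'; apply/implyP.
have [n0 hn0] := bag_cover h.
have [n hn min_n] := arg_minnP depth (hn0 : n0 \in [pred n | h \in B n]).
move: (none n); rewrite (hn : h \in B n); case/negP.
by apply/forallP => n'; apply/implyP; apply: min_n.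
Qed.

Lemma top_bag h : h \in B (top h).
Proof. by case: (top_spec h). Qed.

Lemma top_min h n : h \in B n -> depth (top h) <= depth n.
Proof. by case: (top_spec h) => _; apply. Qed.

Let bag_adj_sub h : subrel (fun a b => adj T a b && (h \in B a) && (h \in B b)) (adj T).
Proof. by move=> a b /andP [/andP []]. Qed.

Lemma top_ancestor h n : h \in B n -> ancestor (top h) n.
Proof.
move=> hn; apply/negPn/negP => out.
have := connect_leave_subtree (@bag_adj_sub h) (bag_connect (top_bag h) hn)
  (ancestor_refl _ _ _) out.
case/andP=> _ /top_min; case: (eqVneq (top h) root) => [top_root|/parentP [_ <-]].
  by move: out; rewrite top_root ancestor_root.
by rewrite ltnn.
Qed.

Lemma mem_bag_between h n n' : h \in B n -> ancestor (top h) n' -> ancestor n' n -> h \in B n'.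
Proof.
move=> hn topn' n'n; case: (eqVneq (top h) n') => [<-|top_n']; first exact: top_bag.
have out : ~~ ancestor n' (top h).
  by apply: contra top_n' => /(ancestor_antisym topn') ->.
have := connect_leave_subtree (@bag_adj_sub h) (bag_connect hn (top_bag h)) n'n out.
by case/andP=> /andP [].
Qed.

Definition cobag x y := exists n, (x \in B n) && (y \in B n).

Definition upper x y := (y \in B (top x)) && ancestor (top y) (top x).

Lemma cobag_refl x : cobag x x.
Proof. by exists (top x); rewrite top_bag. Qed.

Lemma cobag_adj x y : adj H x y -> cobag x y.
Proof. exact: bag_edge. Qed.

Lemma upper_top x y : upper x y -> ancestor (top y) (top x).
Proof. by case/andP. Qed.

Lemma cobag_top_comparable x y : cobag x y -> ancestor (top x) (top y) || ancestor (top y) (top x).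
Proof. by case=> n /andP [/top_ancestor xn /top_ancestor yn]; apply: ancestor_total xn yn. Qed.

Lemma cobag_upper x y : cobag x y -> upper x y \/ upper y x.
Proof.
case=> n /andP [xn yn]; have xtop := top_ancestor xn; have ytop := top_ancestor yn.
case/orP: (ancestor_total xtop ytop) => [xy|yx]; [right | left]; apply/andP; split=> //.
  exact: mem_bag_between xn xy ytop.
exact: mem_bag_between yn yx xtop.
Qed.

Lemma upper_common y a b : upper y a -> upper y b -> upper a b \/ upper b a.
Proof. by case/andP=> ay _ /andP [by_ _]; apply: cobag_upper; exists (top y); rewrite ay. Qed.

Section UpperMeet.
Variable P : pred (vert H).

Definition upper_in x y := upper x y && P y.

Definition upmeet l x y := exists m i j,
  [/\ i + j <= l, m \in reachset upper_in i [set x] & m \in reachset upper_in j [set y]].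

Lemma upmeet_refl x : upmeet 0 x x.
Proof. by exists x, 0, 0; rewrite inE. Qed.

Lemma upmeet_sym l x y : upmeet l x y -> upmeet l y x.
Proof. by case=> m [i [j [l_ij xm ym]]]; exists m, j, i; rewrite addnC. Qed.

Lemma upmeet_le l l' x y : l <= l' -> upmeet l x y -> upmeet l' x y.
Proof.
by move=> ll' [m [i [j [l_ij xm ym]]]]; exists m, i, j; split=> //; apply: leq_trans ll'.
Qed.

Lemma reachset_upper_in_swap j y y' m : m \in reachset upper_in j [set y] ->
  upper y y' -> P y' -> m \in reachset upper_in j [set y'] \/ upper m y'.
Proof.
move=> + yy' Py'; elim: j m => [|j IH] m; first by rewrite inE => /eqP ->; right.
case/reachsetSP=> [/IH [ym|my']|[m' /IH y'_m' m'm]]; last first.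
- case/andP: (m'm) => m'm_up Pm; case: y'_m' => [y'm'|m'y'].
    by left; apply: reachset_adj y'm' m'm.
  case: (upper_common m'y' m'm_up) => [y'm|my']; last by right.
  by left; apply: (subsetP (reachset_le _ _ (ltn0Sn j))); apply: reachset1; apply/andP.
- by right.
- by left; apply: (subsetP (reachsetS _ _ _)).
Qed.

Lemma upmeet_cobag l x y y' : upmeet l x y -> cobag y y' -> P y -> P y' -> upmeet l.+1 x y'.
Proof.
move=> [m [i [j [l_ij xm ym]]]] /cobag_upper [yy'|y'y] Py Py'.
  case: (reachset_upper_in_swap ym yy' Py') => [y'm|my'].
    by exists m, i, j; rewrite leqW.
  exists y', i.+1, 0; rewrite addn0 ltnS /= inE eqxx (leq_trans (leq_addr j i)) //.
  by split=> //; apply: reachset_adj xm _; rewrite /upper_in my'.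
exists m, i, j.+1; rewrite addnS ltnS; split=> //.
rewrite -add1n; apply: (subsetP (reachset_cat _ j 1 _)).
apply: (subsetP (reachset_subset _ _ _)) ym.
by rewrite sub1set; apply: reachset1; apply/andP.
Qed.

End UpperMeet.

Lemma upmeet_reachset l x a :
  upmeet [pred h | ancestor (top a) (top h)] l x a -> a \in reachset upper l [set x].
Proof.
set P := [pred h | _]; move=> [m [i [j [l_ij xm am]]]].
have to_upper s S : reachset (upper_in P) s S \subset reachset upper s S.
  by apply: (reachset_mono (I := predT)) => // ? ? _ /andP [->].
(* Upper steps inside P never leave [top a], so one more step from m reaches a. *)
have top_m : top m = top a.
  apply/eqP; apply: (@reachset_ind _ (upper_in P) [pred h | top h == top a] j [set a]) am.
    by move=> h; rewrite !inE => /eqP ->.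
  move=> h h' /eqP top_h /andP [/upper_top h'h Ph']; apply/eqP.
  by apply: ancestor_antisym Ph'; rewrite -top_h.
case: (eqVneq m a) => [<-|ma].
  apply: (subsetP (reachset_le _ _ (leq_trans (leq_addr j i) l_ij))).
  exact: (subsetP (to_upper _ _)).
have j_gt0 : 0 < j by case: j am {l_ij} => //; rewrite inE (negbTE ma).
apply: (subsetP (reachset_le _ _ (leq_trans (_ : i.+1 <= i + j) l_ij))).
  by rewrite -addn1 leq_add2l.
apply: reachset_adj (subsetP (to_upper _ _) _ xm) _.
by rewrite /upper top_m top_bag ancestor_refl.
Qed.

Lemma reachset_upper_top s z y : y \in reachset upper s (B z) -> ancestor (top y) z.
Proof.
move: y; apply: (reachset_ind (P := fun y => ancestor (top y) z)) => [h /top_ancestor //|x y xz].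
move=> /upper_top yx.
exact: ancestor_trans yx xz.
Qed.

Lemma reachset_upper_between s z z' y : y \in reachset upper s (B z) ->
  ancestor (top y) z' -> ancestor z' z -> y \in reachset upper s (B z').
Proof.
elim: s y => [|s IH] y; first exact: mem_bag_between.
case/reachsetSP=> [yz yz' z'z|[x xz xy] yz' z'z].
  exact: (subsetP (reachsetS _ _ _)) _ (IH _ yz yz' z'z).
case/orP: (ancestor_total (reachset_upper_top xz) z'z) => [xz'|z'x].
  exact: reachset_adj (IH _ xz xz' z'z) xy.
apply: (subsetP (sub_reachset _ _ _)); case/andP: xy => yx _.
exact: mem_bag_between yx yz' z'x.
Qed.

Lemma connect_reachset_upper s h i j :
  h \in reachset upper s (B i) -> h \in reachset upper s (B j) ->
  connect (fun a b =>
    adj T a b && (h \in reachset upper s (B a)) && (h \in reachset upper s (B b))) i j.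
Proof.
set e := (fun a b => _); have e_sym : symmetric e.
  by move=> a b; rewrite /e (tree_sym T_tree) -!andbA; congr (_ && _); rewrite andbC.
have to_top z : h \in reachset upper s (B z) -> connect e z (top h).
  move=> hz; apply: connect_parent_path (reachset_upper_top hz) _ => y topy yz ytop.
  have y_root : y != root.
    apply: contra ytop => /eqP y_r; rewrite y_r in topy *.
    by rewrite (ancestor_antisym topy (ancestor_root _ _ _)).
  rewrite /e (tree_sym T_tree) (parentP T_tree y_root).1 (reachset_upper_between hz topy yz) /=.
  apply: reachset_upper_between hz _ (ancestor_trans (ancestor_parent _ _ _) yz).
  by apply: ancestor_parent_r topy _; rewrite eq_sym.
by move=> hi hj; apply: connect_trans (to_top _ hi) _; rewrite (sym_connect_sym e_sym) to_top.
Qed.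

Section UpperCount.
Variable z : vert T.

(* Along the path from the root to z, a vertex x occupies the depths [lo x, hi x]. *)
Let lo x := depth (top x).
Let hi x := \max_(n | ancestor n z && (x \in B n)) depth n.
Let V := [set x | ancestor (top x) z].

Lemma leq_hi x n : ancestor n z -> x \in B n -> depth n <= hi x.
Proof.
by move=> nz xn; rewrite /hi; apply: (@leq_bigmax_cond _ _ (fun n => depth n) n); rewrite nz xn.
Qed.

Lemma reachset_upper_interval s :
  reachset upper s (B z) \subset reachset (interval_step lo hi V) s (covering lo hi V (depth z)).
Proof.
apply: (reachset_mono (I := [in V])) => [x /top_ancestor xz|x y|]; rewrite ?inE //.
  move=> xz /andP [yx yxtop]; rewrite /interval_step !inE.
  by rewrite (ancestor_trans yxtop xz) (ancestor_depth yxtop) leq_hi.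
apply/subsetP => x xz; have xtop := top_ancestor xz.
by rewrite !inE xtop (ancestor_depth xtop) (leq_hi (ancestor_refl _ _ _) xz).
Qed.

Lemma ply_upper : ply_le lo hi V (depth z) t.+1.
Proof.
move=> i iz; have [a az depth_a] := ancestor_at_depth iz.
apply: leq_trans (card_bag a); apply/subset_leq_card/subsetP => x.
rewrite !inE => /and3P [xz xi ix].
have : 0 < #|[pred n | ancestor n z && (x \in B n)]|.
  by apply/card_gt0P; exists (top x); rewrite inE xz top_bag.
case/(eq_bigmax_cond (fun n => depth n)) => n; rewrite inE => /andP [nz xn] hi_x.
rewrite /hi hi_x in ix.
apply: mem_bag_between xn _ _.
  by apply: ancestor_le xz az _; rewrite depth_a.
by apply: ancestor_le az nz _; rewrite depth_a.
Qed.

End UpperCount.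

Lemma card_reachset_upper s z : #|reachset upper s (B z)| <= 'C(s + t.+1, t).
Proof.
apply: leq_trans (subset_leq_card (reachset_upper_interval z s)) _.
apply: card_reachset_covering; exact: ply_upper.
Qed.

End TreeDecomposition.

Lemma card_bigcup_le (X Y : finType) (I : {set X}) (F : X -> {set Y}) c :
  (forall x, x \in I -> #|F x| <= c) -> #|\bigcup_(x in I) F x| <= #|I| * c.
Proof.
move=> F_le; apply: (@leq_trans (\sum_(x in I) #|F x|)).
  elim/big_rec2: _ => [|x n A _ h]; first by rewrite cards0.
  by apply: leq_trans (leq_card_setU _ _) _; rewrite leq_add2l.
by rewrite -sum_nat_const; apply: leq_sum.
Qed.

Section ProductStructure.
Variables (G H L T : graph) (l t m : nat) (B : vert T -> {set vert H}).
Hypothesis G_sym : symmetric (adj G).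
Variable f : vert G -> vert (sprod (sprod H L) (complete l)).
Hypothesis f_inj : injective f.
Hypothesis f_adj : forall x y, adj G x y -> adj (sprod (sprod H L) (complete l)) (f x) (f y).
Hypothesis TD : tree_decomposition_width_le B t.
Variable root : vert T.

Let T_tree : is_tree T := TD.1.
Local Notation depth := (depth T_tree root).
Local Notation ancestor := (ancestor T_tree root).
Local Notation top := (top TD root).
Local Notation upper := (upper TD root).

Definition projH x : vert H := (f x).1.1.
Definition projL x : vert L := (f x).1.2.

Lemma projH_adj x y : adj G x y -> projH x = projH y \/ adj H (projH x) (projH y).
Proof.
move/f_adj => /andP [/andP [_ xy] _]; rewrite /projH.
case/orP: xy => [/eqP ->|/andP [/andP [_ xy] _]]; first by left.
by case/orP: xy => [/eqP ->|]; [left | right].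
Qed.

Lemma projL_adj x y : adj G x y -> projL x = projL y \/ adj L (projL x) (projL y).
Proof.
move/f_adj => /andP [/andP [_ xy] _]; rewrite /projL.
case/orP: xy => [/eqP ->|/andP [_ xy]]; first by left.
by case/orP: xy => [/eqP ->|]; [left | right].
Qed.

Lemma projH_cobag x y : adj G x y -> cobag B (projH x) (projH y).
Proof. by case/projH_adj => [->|/(cobag_adj TD)//]; apply: cobag_refl TD root _. Qed.

Definition proj_ball n u := [set projH x | x in [set x | reach n u x]].

Lemma proj_ball_center n u : projH u \in proj_ball n u.
Proof. by apply/imsetP; exists u; rewrite // inE (@reach_le _ 0) //= eqxx. Qed.

Definition anchor n u := [arg min_(a < projH u in proj_ball n u) depth (top a)].

Lemma anchor_ball n u : anchor n u \in proj_ball n u.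
Proof. by rewrite /anchor; case: (arg_minnP _ (proj_ball_center n u)). Qed.

Lemma anchor_min n u h : h \in proj_ball n u -> depth (top (anchor n u)) <= depth (top h).
Proof. by rewrite /anchor; case: (arg_minnP _ (proj_ball_center n u)) => a _; apply. Qed.

Lemma proj_ballS n u : proj_ball n u \subset proj_ball n.+1 u.
Proof. by apply: imsetS; apply/subsetP => x; rewrite !inE => /reachS. Qed.

Lemma anchor_ancestor n u h : h \in proj_ball n u -> ancestor (top (anchor n u)) (top h).
Proof.
elim: n h => [|n IH] h.
  have ball0 h' : h' \in proj_ball 0 u -> h' = projH u by case/imsetP=> x; rewrite inE => /eqP <-.
  by move=> /ball0 ->; rewrite (ball0 _ (anchor_ball 0 u)) ancestor_refl.
set a := anchor n u.
have comparable h' : h' \in proj_ball n.+1 u ->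
    ancestor (top a) (top h') || ancestor (top h') (top a).
  case/imsetP=> x; rewrite inE => /reachSP [ux|[w uw wx]] ->.
    by rewrite IH //; apply/imsetP; exists x; rewrite ?inE.
  have aw : ancestor (top a) (top (projH w)) by apply: IH; apply/imsetP; exists w; rewrite ?inE.
  case/orP: (cobag_top_comparable TD root (projH_cobag wx)) => [/(ancestor_trans aw) -> //|xw].
  exact: ancestor_total aw xw.
move=> hS; have aS : a \in proj_ball n.+1 u.
  by apply: (subsetP (proj_ballS n u)); apply: anchor_ball.
apply: min_depth_ancestor (comparable _ hS) (comparable _ (anchor_ball _ _)) _ (anchor_min hS).
exact: anchor_min aS.
Qed.

Local Notation below_anchor u := [pred h | ancestor (top (anchor m u)) (top h)].

Lemma upmeet_ball u d h n y : n <= m -> upmeet TD root (below_anchor u) d h (projH u) ->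
  reach n u y -> upmeet TD root (below_anchor u) (d + n) h (projH y).
Proof.
have below n' x : n' <= m -> reach n' u x -> ancestor (top (anchor m u)) (top (projH x)).
  by move=> n'm ux; apply: anchor_ancestor; apply/imsetP; exists x; rewrite // inE (reach_le n'm).
move=> + meet; elim: n y => [|n IH] y nm; first by move=> /eqP <-; rewrite addn0.
case/reachSP=> [uy|[w uw wy]].
  by rewrite addnS -addn1; apply: upmeet_le (leq_addr 1 _) (IH _ (ltnW nm) uy).
rewrite addnS; apply: upmeet_cobag (IH _ (ltnW nm) uw) (projH_cobag wy) _ _.
  exact: below (ltnW nm) uw.
exact: below nm (reach_adj uw wy).
Qed.

Lemma anchor_reachset u x z : reach m u x -> projH x \in B z ->
  anchor m u \in reachset upper m.*2 (B z).
Proof.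
move=> ux xz; have /imsetP [a] := anchor_ball m u; rewrite inE => ua anchor_a.
have meet_x := upmeet_ball (leqnn m) (upmeet_refl TD root (below_anchor u) (projH u)) ux.
have meet_a := upmeet_ball (leqnn m) (upmeet_sym meet_x) ua.
rewrite add0n addnn -anchor_a in meet_a.
apply: (subsetP (reachset_subset _ _ _)) (upmeet_reachset meet_a).
by rewrite sub1set.
Qed.

Definition Jbag z := reachset upper m.*2 (B z).

Definition J : graph :=
  @Graph (vert H) (fun h h' => (h != h') && [exists z, (h \in Jbag z) && (h' \in Jbag z)]).

Lemma J_simple : simple J.
Proof.
split=> [h h'|h] /=; last by rewrite eqxx.
rewrite eq_sym; congr (_ && _); apply/existsP/existsP => [] [z hz]; exists z; by rewrite andbC.
Qed.

Lemma J_treewidth : treewidth_le J ('C(m.*2 + t + 1, t) - 1).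
Proof.
exists T, Jbag; split; first exact: T_tree.
split=> [h|].
  exists (top h); exact: (subsetP (sub_reachset upper m.*2 (B (top h))) h (top_bag TD root h)).
split=> [h h' /andP [_ /existsP [z hh']]|]; first by exists z; exact: hh'.
split=> [h i j hi hj|z].
  exact: (@connect_reachset_upper _ _ _ _ TD root _ (h : vert H) i j hi hj).
have C_gt0 : 0 < 'C(m.*2 + t + 1, t) by rewrite bin_gt0 addn1 leqW ?leq_addl.
rewrite subn1 (prednK C_gt0) -addnA addn1; exact: (card_reachset_upper TD root m.*2 z).
Qed.

Lemma anchor_adj u v : reach m.*2.+1 u v ->
  anchor m u = anchor m v \/ adj J (anchor m u) (anchor m v).
Proof.
rewrite -addnn -addnS -add1n => /reach_split [x ux /(@reach_split _ 1) [y xy yv]].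
have [z /andP [xz yz]] : cobag B (projH x) (projH y).
  case/reachSP: xy => [/eqP <-|[w /eqP <- wy]]; first exact: cobag_refl TD root _.
  exact: projH_cobag.
have uz := anchor_reachset ux xz; have vz := anchor_reachset (reach_sym G_sym yv) yz.
case: (eqVneq (anchor m u) (anchor m v)) => [|uv]; [by left | right].
apply/andP; split; first exact: uv.
by apply/existsP; exists z; apply/andP; split; [exact: uz | exact: vz].
Qed.

Definition fibre a y := [set w | (anchor m w == a) && (projL w == y)].

Lemma card_anchor_candidates a y :
  #|[set x | (projH x == a) && reach m y (projL x)]| <= l * (maxdeg (gpow L m)).+1.
Proof.
set X := [set x | _]; pose g x := ((f x).1.2, (f x).2).
have g_inj : {in X &, injective g}.
  move=> x1 x2; rewrite !inE /g /projH => /andP [/eqP x1a _] /andP [/eqP x2a _] [e2 e3].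
  apply: f_inj; move: x1a x2a e2 e3.
  by case: (f x1) => [[? ?] ?]; case: (f x2) => [[? ?] ?] /= -> -> -> ->.
rewrite -(card_in_imset g_inj); apply: (@leq_trans #|setX [set w | reach m y w] [set: 'I_l]|).
  apply/subset_leq_card/subsetP => _ /imsetP [x + ->]; rewrite !inE => /andP [_ yx].
  by rewrite andbT.
by rewrite cardsX cardsT card_ord mulnC leq_mul2l card_ball orbT.
Qed.

Definition colours := l * (maxdeg (gpow G m)).+1 * (maxdeg (gpow L m)).+1.

Lemma card_fibre a y : #|fibre a y| <= colours.
Proof.
set X := [set x | (projH x == a) && reach m y (projL x)].
apply: (@leq_trans #|\bigcup_(x in X) [set w | reach m x w]|).
  apply/subset_leq_card/subsetP => w; rewrite inE => /andP [/eqP wa /eqP wy].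
  have /imsetP [x] := anchor_ball m w; rewrite inE => wx ax.
  apply/bigcupP; exists x; last by rewrite inE reach_sym.
  by rewrite inE -ax wa eqxx -wy (reach_map projL_adj wx).
apply: leq_trans (card_bigcup_le (c := (maxdeg (gpow G m)).+1) _) _ => [x _|].
  exact: card_ball.
by rewrite /colours mulnAC leq_mul2r card_anchor_candidates orbT.
Qed.

Lemma index_fibre_lt u : index u (enum (fibre (anchor m u) (projL u))) < colours.
Proof.
apply: leq_trans (card_fibre (anchor m u) (projL u)).
by rewrite cardE index_mem mem_enum inE !eqxx.
Qed.

Definition colour u : 'I_colours := Ordinal (index_fibre_lt u).

Definition embed u : vert (sprod (sprod J (gpow L m.*2.+1)) (complete colours)) :=
  ((anchor m u, projL u), colour u).

Lemma embed_inj : injective embed.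
Proof.
move=> u v [anchor_uv projL_uv]; rewrite -anchor_uv -projL_uv => index_uv.
have fibre_u : u \in enum (fibre (anchor m u) (projL u)) by rewrite mem_enum inE !eqxx.
have fibre_v : v \in enum (fibre (anchor m u) (projL u)).
  by rewrite mem_enum inE anchor_uv projL_uv !eqxx.
by rewrite -(nth_index u fibre_u) -(nth_index u fibre_v) index_uv.
Qed.

Lemma embed_adj k u v : k <= m.*2.+1 -> adj (gpow G k) u v ->
  adj (sprod (sprod J (gpow L m.*2.+1)) (complete colours)) (embed u) (embed v).
Proof.
move=> km /andP [uv /(reach_le km) uv_reach].
rewrite /= (inj_eq embed_inj) uv orbN andbT; apply/orP.
case: eqP => [_|_]; [by left | right]; apply/andP; split.
  case: (anchor_adj uv_reach) => [->|anchor_uv]; first by rewrite eqxx.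
  by apply/orP; right; exact: anchor_uv.
case: (eqVneq (projL u) (projL v)) => //= projL_uv.
exact: reach_map projL_adj uv_reach.
Qed.

End ProductStructure.

Theorem theorem27 (t l k : nat) (hl : 1 <= l) (hk : 1 <= k)
    (G H L : graph) (sG : simple G) (sH : simple H) (sL : simple L)
    (hG : contained G (sprod (sprod H L) (complete l)))
    (htw : treewidth_le H t) :
  let d := maxdeg (gpow G k./2) in
  let D := maxdeg (gpow L k./2) in
  exists J : graph, simple J /\
    treewidth_le J ('C((k./2).*2 + t + 1, t) - 1) /\
    contained (gpow G k)
      (sprod (sprod J (gpow L (k./2).*2.+1)) (complete (l * d.+1 * D.+1))).
Proof.
move=> d D; have [f [f_inj f_adj]] := hG; have [T [B TD]] := htw.
have [[_ [[root _] _]] _] := TD.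
have k_le : k <= (k./2).*2.+1 by rewrite -{1}(odd_double_half k) addnC -addn1 leq_add2l leq_b1.
have G_sym : symmetric (adj G) by case: sG.
exists (J k./2 TD root); split; first exact: J_simple.
split; first exact: J_treewidth.
exists (embed k./2 G_sym f_inj f_adj TD root); split; first exact: embed_inj.
by move=> u v; apply: (embed_adj G_sym f_inj f_adj TD root k_le).
Qed.
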